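(* Let $D$ be an integrally closed domain with quotient field $K$, let $\overline{K}$ be an algebraic closure of $K$, $\overline{D}$ the integral closure of $D$ in $\overline{K}$, and $G_K=\mathrm{Gal}(\overline{K}/K)$. Let $\Omega\subseteq\overline{D}$ be $G_K$-invariant, and let $F\subseteq\overline{K}$ be an algebraic extension of $K$ containing $\Omega$. Then $\textnormal{Int}_F(\Omega,\overline{D})$ is the integral closure of $\textnormal{Int}_K(\Omega,\overline{D})$ in $F(X)$.
   Context: For a field $L$ with $K\subseteq L\subseteq\overline{K}$, $\textnormal{Int}_L(\Omega,\overline{D})=\{f\in L[X]\mid f(a)\in\overline{D}\ \forall a\in\Omega\}$. For $\Omega\subseteq\overline{K}$, $G_K(\Omega)=\{\sigma(a)\mid\sigma\in G_K,a\in\Omega\}$, and $\Omega$ is $G_K$-invariant if $G_K(\Omega)=\Omega$. *)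

From HB Require Import structures.
From mathcomp Require Import all_boot all_order all_algebra fraction.
Set Implicit Arguments. Unset Strict Implicit. Unset Printing Implicit Defensive.
Import GRing.Theory Num.Theory.
Local Open Scope ring_scope.

Notation tofracp := (@FracField.tofrac _).


Definition integral_over (R : comNzRingType) (S : R -> Prop) (x : R) : Prop :=
  exists p : {poly R}, p \is monic /\ (forall i, S p`_i) /\ root p x.

Definition poly_over (R : nzRingType) (S : R -> Prop) (p : {poly R}) : Prop :=
  forall i, S p`_i.

Definition is_subring (R : nzRingType) (S : R -> Prop) : Prop :=
  S 1 /\ (forall x y, S x -> S y -> S (x - y)) /\ (forall x y, S x -> S y -> S (x * y)).

Definition is_subfield (L : fieldType) (S : L -> Prop) : Prop :=
  is_subring S /\ (forall x, S x -> S x^-1).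

Definition is_quotient_field (L : fieldType) (D K : L -> Prop) : Prop :=
  (forall x, D x -> K x) /\
  (forall k, K k -> exists a b, D a /\ D b /\ b != 0 /\ k = a / b).

Definition integrally_closed_in (L : fieldType) (D K : L -> Prop) : Prop :=
  forall x, K x -> integral_over D x -> D x.

Definition algebraic_over (L : fieldType) (K : L -> Prop) : Prop :=
  forall x : L, exists p : {poly L}, p != 0 /\ poly_over K p /\ root p x.

Definition in_GK (L : fieldType) (K : L -> Prop) (sigma : {rmorphism L -> L}) : Prop :=
  bijective sigma /\ (forall x, K x -> sigma x = x).

Definition GK_invariant (L : fieldType) (K Omega : L -> Prop) : Prop :=
  forall x, (exists (sigma : {rmorphism L -> L}) a,
                in_GK K sigma /\ Omega a /\ x = sigma a) <-> Omega x.

Definition IntF (L : fieldType) (F Omega Dbar : L -> Prop) (f : {poly L}) : Prop :=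
  poly_over F f /\ (forall a, Omega a -> Dbar f.[a]).

Definition in_ratfun_field (L : fieldType) (F : L -> Prop) (phi : {fraction {poly L}}) : Prop :=
  exists p q : {poly L}, poly_over F p /\ poly_over F q /\ q != 0 /\ phi = tofracp p / tofracp q.

(* If phi in F(X) is integral over Int_K(Omega, Dbar), it is integral over L[X], which is
   integrally closed, so phi is a polynomial f with coefficients in F; for a in Omega, f(a)
   is then a root of a monic polynomial whose coefficients are values at a of elements of
   Int_K(Omega, Dbar), hence integral over D.
   Conversely, the coefficients of f are algebraic over K, so f has finitely many conjugates
   sigma f (sigma in G_K) and P = prod (T - sigma f) is G_K-invariant. As Omega is G_K-stable,
   (sigma f)(a) = sigma (f (sigma^-1 a)) is integral over D, hence so are the values on Omega
   of the coefficients of P. These coefficients have G_K-fixed, hence purely inseparable,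
   coefficients over K, so some power P^q with q a power of the characteristic has its
   coefficients in Int_K(Omega, Dbar) and still annihilates f.
   There are enough automorphisms because, by Zorn's lemma, every partial K-embedding
   extends to all of L: a point x is adjoined by sending it to a root of the image of a
   minimal polynomial of x over the domain of the embedding. *)

From HB Require Import structures.
From mathcomp Require Import all_boot all_order all_algebra fraction.
From mathcomp Require Import boolp classical_sets.
Set Implicit Arguments. Unset Strict Implicit. Unset Printing Implicit Defensive.
Import GRing.Theory Num.Theory.
Local Open Scope ring_scope.

Definition subring_pred (R : nzRingType) (S : R -> Prop) of is_subring S : pred R :=
  fun x => `[< S x >].

Lemma subring_predP (R : nzRingType) (S : R -> Prop) (HS : is_subring S) x :
  reflect (S x) (x \in subring_pred HS).
Proof. by rewrite unfold_in; apply: asboolP. Qed.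

Fact subring_pred_closed (R : nzRingType) (S : R -> Prop) (HS : is_subring S) :
  subring_closed (subring_pred HS).
Proof.
case: (HS) => S1 [SB SM]; split; first exact/subring_predP.
- by move=> x y /subring_predP Sx /subring_predP Sy; apply/subring_predP/SB.
- by move=> x y /subring_predP Sx /subring_predP Sy; apply/subring_predP/SM.
Qed.

HB.instance Definition _ (R : nzRingType) (S : R -> Prop) (HS : is_subring S) :=
  GRing.isSubringClosed.Build R (subring_pred HS) (subring_pred_closed HS).

Definition subfield_pred (L : fieldType) (S : L -> Prop) of is_subfield S : pred L :=
  fun x => `[< S x >].

Lemma subfield_predP (L : fieldType) (S : L -> Prop) (HS : is_subfield S) x :
  reflect (S x) (x \in subfield_pred HS).
Proof. by rewrite unfold_in; apply: asboolP. Qed.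

Fact subfield_pred_closed (L : fieldType) (S : L -> Prop) (HS : is_subfield S) :
  divring_closed (subfield_pred HS).
Proof.
case: (HS) => -[S1 [SB SM]] SV; split; first exact/subfield_predP.
- by move=> x y /subfield_predP Sx /subfield_predP Sy; apply/subfield_predP/SB.
- by move=> x y /subfield_predP Sx /subfield_predP Sy; apply/subfield_predP/SM/SV.
Qed.

HB.instance Definition _ (L : fieldType) (S : L -> Prop) (HS : is_subfield S) :=
  GRing.isDivringClosed.Build L (subfield_pred HS) (subfield_pred_closed HS).

Lemma poly_overP (R : nzRingType) (S : R -> Prop) (HS : is_subring S) p :
  reflect (poly_over S p) (p \is a polyOver (subring_pred HS)).
Proof. by apply: (iffP polyOverP) => Sp i; apply/subring_predP. Qed.

Lemma poly_over_subfieldP (L : fieldType) (S : L -> Prop) (HS : is_subfield S) p :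
  reflect (poly_over S p) (p \is a polyOver (subfield_pred HS)).
Proof. by apply: (iffP polyOverP) => Sp i; apply/subfield_predP. Qed.

Section PredSub.
Variables (T : choiceType) (S : {pred T}).
Record pred_sub := PredSub { pred_sub_val :> T; _ : pred_sub_val \in S }.
HB.instance Definition _ := [isSub for pred_sub_val].
HB.instance Definition _ := [Choice of pred_sub by <:].
End PredSub.

HB.instance Definition _ (R : comNzRingType) (S : subringClosed R) :=
  [SubChoice_isSubComNzRing of pred_sub S by <:].
HB.instance Definition _ (F : fieldType) (S : divringClosed F) :=
  [SubRing_isSubUnitRing of pred_sub S by <:].
HB.instance Definition _ (F : fieldType) (S : divringClosed F) :=
  [SubComUnitRing_isSubIntegralDomain of pred_sub S by <:].
HB.instance Definition _ (F : fieldType) (S : divringClosed F) :=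
  [SubIntegralDomain_isSubField of pred_sub S by <:].

Lemma map_poly_lift (A B : nzRingType) (f : {rmorphism A -> B}) (Q : A -> Prop)
    (p : {poly B}) :
  Q 0 -> (forall i, exists2 a, Q a & f a = p`_i) ->
  exists2 P : {poly A}, (forall i, Q P`_i) & map_poly f P = p.
Proof.
move=> Q0; elim/poly_ind: p => [|p c IHp] liftp.
  by exists 0 => [i|]; rewrite ?coef0 ?map_poly0.
have [P QP <-] : exists2 P : {poly A}, (forall i, Q P`_i) & map_poly f P = p.
  by apply: IHp => i; have [a Qa] := liftp i.+1; rewrite coefD coefMX coefC addr0; exists a.
have [a Qa fa] := liftp 0%N; rewrite coefD coefMX coefC add0r /= in fa.
exists (P * 'X + a%:P) => [i|]; last by rewrite rmorphD rmorphM /= map_polyX map_polyC -fa.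
by rewrite coefD coefMX coefC; case: i => [|i] /=; rewrite ?add0r ?addr0.
Qed.

Lemma polyOver_pred_sub (R : comNzRingType) (S : subringClosed R) (p : {poly R}) :
  p \is a polyOver S -> exists P : {poly pred_sub S}, map_poly val P = p.
Proof.
move=> /polyOverP Sp.
have [|P _ <-] := @map_poly_lift (pred_sub S) R val (fun=> True) p I; last by exists P.
by move=> i; exists (PredSub (Sp i)).
Qed.

Section IntegralOverSubring.
Variables (R : comNzRingType) (D : R -> Prop) (HD : is_subring D).
Local Notation valD := (val : {rmorphism pred_sub (subring_pred HD) -> R}).

Lemma integral_overP x : integral_over D x <-> integralOver valD x.
Proof.
split=> [[p [monp [/(poly_overP HD) Dp px]]] | [P monP Px]].
  have [P defp] := polyOver_pred_sub Dp; exists P; last by rewrite defp.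
  apply/monicP/val_inj; rewrite /= -(lead_coef_map_inj val_inj (rmorph0 valD)).
  by rewrite defp (monicP monp).
exists (map_poly valD P); split; first exact: monic_map.
by split=> // i; rewrite coef_map; apply/subring_predP/valP.
Qed.

Lemma integral_over_id x : D x -> integral_over D x.
Proof.
by move=> /(subring_predP HD) Dx; apply/integral_overP; have := integral_id valD (PredSub Dx).
Qed.

Lemma integral_over_subring : is_subring (integral_over D).
Proof.
split; first by apply: integral_over_id; case: HD.
by split=> x y /integral_overP Dx /integral_overP Dy; apply/integral_overP;
  [apply: integral_sub | apply: integral_mul].
Qed.

Lemma integral_over_root_monic (p : {poly R}) u :
  p \is monic -> root p u -> (forall i, integral_over D p`_i) -> integral_over D u.
Proof.
move=> monp pu Dp; apply/integral_overP; apply: integral_root_monic monp pu _.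
by apply/integral_poly => i; apply/integral_overP.
Qed.

End IntegralOverSubring.

Lemma poly_over_divp (L : fieldType) (F : L -> Prop) (HF : is_subfield F) (p q : {poly L}) :
  poly_over F p -> poly_over F q -> poly_over F (p %/ q).
Proof.
move=> /(poly_over_subfieldP HF)/polyOver_pred_sub[P <-].
move=> /(poly_over_subfieldP HF)/polyOver_pred_sub[Q <-].
by apply/(poly_over_subfieldP HF)/polyOverP => i; rewrite -map_divp coef_map; apply: valP.
Qed.

Lemma ex_minimizer (T : Type) (P : T -> Prop) (w : T -> nat) :
  (exists t, P t) -> exists t, P t /\ forall u, P u -> (w t <= w u)%N.
Proof.
move=> [t Pt]; have exw : exists n, `[< exists2 t, P t & w t = n >].
  by exists (w t); apply/asboolP; exists t.
case: (ex_minnP exw) => _ /asboolP[t' Pt' <-] minw; exists t'; split=> // u Pu.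
by apply: minw; apply/asboolP; exists u.
Qed.

(* Minimality is by size among nonzero polynomials; neither [h] nor [m] need be monic. *)
Definition min_poly_over (L : fieldType) (K : L -> Prop) (x : L) (h : {poly L}) :=
  [/\ h != 0, poly_over K h, root h x &
      forall r, poly_over K r -> root r x -> (size r < size h)%N -> r = 0].

Definition min_root_poly (A L : nzRingType) (f : A -> L) (x : L) (m : {poly A}) :=
  [/\ m != 0, root (map_poly f m) x &
      forall r, root (map_poly f r) x -> (size r < size m)%N -> r = 0].

Section RootTransfer.
Import Pdiv.CommonRing Pdiv.ComRing.

(* Pseudo-divide [p] by [m]: the remainder vanishes by minimality of [m]. *)
Lemma root_map_poly_transfer (A : comNzRingType) (L : idomainType)
    (f g : {rmorphism A -> L}) (x y : L) (m p : {poly A}) :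
  min_root_poly f x m -> root (map_poly g m) y -> g (lead_coef m) != 0 ->
  root (map_poly f p) x -> root (map_poly g p) y.
Proof.
move=> [m_neq0 mx m_min] my glc px.
have evalE (h : {rmorphism A -> L}) z : (map_poly h (lead_coef m ^+ rscalp p m *: p)).[z] =
    (map_poly h (rdivp p m)).[z] * (map_poly h m).[z] + (map_poly h (rmodp p m)).[z].
  by rewrite rdivp_eq rmorphD rmorphM /= hornerD hornerM.
have r0 : rmodp p m = 0.
  apply: m_min; last by rewrite ltn_rmodp.
  have := evalE f x; rewrite map_polyZ hornerZ (rootP px) (rootP mx).
  by rewrite !mulr0 add0r => /esym; rewrite /root => ->.
have := evalE g y; rewrite r0 map_polyZ hornerZ (rootP my) rmorph0 horner0 mulr0 addr0.
by move/eqP; rewrite mulf_eq0 rmorphXn expf_eq0 (negbTE glc) andbF.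
Qed.

End RootTransfer.

(* The graph of a [K]-embedding into [L] of a subring of [L], as a subring of [L * L]. *)
Definition kHom_graph (L : fieldType) (K : L -> Prop) (G : (L * L)%type -> Prop) :=
  [/\ is_subring G, (forall a b c, G (a, b) -> G (a, c) -> b = c) & forall k, K k -> G (k, k)].

Lemma kHom_graph_subring (L : fieldType) (K : L -> Prop) (G : (L * L)%type -> Prop) :
  kHom_graph K G -> is_subring G.
Proof. by case. Qed.

Section GraphExtension.
Variables (L : closedFieldType) (K : L -> Prop) (G : (L * L)%type -> Prop).
Hypotheses (algK : algebraic_over K) (HG : kHom_graph K G).

Local Notation G_subring := (kHom_graph_subring HG).
Local Notation A := (pred_sub (subring_pred G_subring)).
Local Notation f := (fst \o val : A -> L).
Local Notation g := (snd \o val : A -> L).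

Lemma graph_pair (a : A) : G (f a, g a).
Proof. by apply/(subring_predP G_subring); rewrite -surjective_pairing; apply: valP. Qed.

Lemma graph_fst_inj : injective f.
Proof.
move=> a b fab; have gab : g a = g b.
  by have [_ Gfun _] := HG; apply: Gfun (graph_pair a) _; rewrite fab; apply: graph_pair.
by apply: val_inj; rewrite [val a]surjective_pairing [val b]surjective_pairing; congr (_, _).
Qed.

Lemma graph_lift_poly (h : {poly L}) :
  poly_over K h -> exists2 P : {poly A}, map_poly f P = h & map_poly g P = h.
Proof.
move=> Kh; have [|P gfP fP] := @map_poly_lift _ _ f (fun a => g a = f a) h (rmorph0 _).
  move=> i; have Gh : (h`_i, h`_i) \in subring_pred G_subring.
    by have [_ _ GK] := HG; exact/subring_predP/GK.
  by exists (PredSub Gh).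
exists P => //; rewrite -fP; apply/polyP => i; rewrite !coef_map; apply: gfP.
Qed.

Lemma graph_lift_min_poly x h : (forall a b, G (a, b) -> K a) -> min_poly_over K x h ->
  exists2 P : {poly A}, min_root_poly f x P & map_poly g P = h.
Proof.
move=> GK [h_neq0 Kh hx h_min]; have [P fP gP] := graph_lift_poly Kh.
exists P => //; split; [|by rewrite fP|].
  by apply: contraNneq h_neq0 => P0; rewrite -fP P0 map_poly0.
move=> r rx r_small; apply: (map_inj_poly graph_fst_inj (rmorph0 _)); rewrite map_poly0.
have size_f := size_map_inj_poly graph_fst_inj (rmorph0 _).
apply: h_min rx _; last by rewrite size_f -fP size_f.
by move=> i; rewrite coef_map; apply: GK (graph_pair _).
Qed.

(* Otherwise [f a != 0] is a root of some [q] over [K] with [q(0) != 0], and so is [g a]. *)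
Lemma graph_snd_eq0 (a : A) : g a = 0 -> a = 0.
Proof.
move=> ga0; apply: graph_fst_inj; rewrite rmorph0; apply/eqP/contraT => fa_neq0.
have [h [h_neq0 [Kh ha]]] := algK (f a).
have [n [q /implyP/(_ h_neq0) q0_neq0 defh]] := multiplicity_XsubC h 0.
rewrite polyC0 subr0 in defh.
have Kq : poly_over K q.
  by move=> i; have := Kh (i + n)%N; rewrite defh coefMXn ltnNge leq_addl addnK.
have qa : root q (f a).
  by move: ha; rewrite /root defh hornerM hornerXn mulf_eq0 expf_eq0 (negbTE fa_neq0) andbF orbF.
have [Q fQ gQ] := graph_lift_poly Kq.
have Qa : Q.[a] = 0 by apply: graph_fst_inj; rewrite -horner_map fQ rmorph0 (rootP qa).
have : root q (g a) by rewrite /root -gQ horner_map Qa rmorph0.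
by rewrite ga0 (negbTE q0_neq0).
Qed.

Lemma graph_lead_coef_neq0 (m : {poly A}) : m != 0 -> g (lead_coef m) != 0.
Proof. by apply: contraNneq => /graph_snd_eq0/eqP; rewrite lead_coef_eq0. Qed.

Lemma graph_min_poly x : exists m : {poly A}, min_root_poly f x m.
Proof.
have [h [h_neq0 [Kh hx]]] := algK x; have [P fP _] := graph_lift_poly Kh.
have P_neq0 : P != 0 by apply: contraNneq h_neq0 => P0; rewrite -fP P0 map_poly0.
have [|m [[m_neq0 mx] m_min]] :=
  @ex_minimizer _ (fun m : {poly A} => m != 0 /\ root (map_poly f m) x) size.
  by exists P; rewrite fP.
exists m; split=> // r rx; apply: contraTeq => r_neq0; rewrite -leqNgt; exact: m_min.
Qed.

Definition graph_adjoin x y : (L * L)%type -> Prop :=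
  fun pr => exists P : {poly A}, pr = ((map_poly f P).[x], (map_poly g P).[y]).

Section Adjoin.
Variables (x y : L) (m : {poly A}).
Hypotheses (min_m : min_root_poly f x m) (my : root (map_poly g m) y).

Lemma graph_adjoin_fun (P Q : {poly A}) :
  (map_poly f P).[x] = (map_poly f Q).[x] -> (map_poly g P).[y] = (map_poly g Q).[y].
Proof.
move=> PQx; apply/eqP; rewrite -subr_eq0 -hornerN -hornerD -rmorphB.
have [m_neq0 _ _] := min_m.
apply: root_map_poly_transfer min_m my (graph_lead_coef_neq0 m_neq0) _.
by rewrite /root rmorphB hornerD hornerN PQx subrr.
Qed.

Lemma kHom_graph_adjoin : kHom_graph K (graph_adjoin x y).
Proof.
split; [split; [|split] | |].
- by exists 1; rewrite !rmorph1 !hornerC.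
- by move=> _ _ [P ->] [Q ->]; exists (P - Q); rewrite !rmorphB !hornerE.
- by move=> _ _ [P ->] [Q ->]; exists (P * Q); rewrite !rmorphM !hornerE.
- by move=> a b c [P [-> ->]] [Q [PQx ->]]; apply: graph_adjoin_fun.
- move=> k Kk; have Gk : (k, k) \in subring_pred G_subring.
    by have [_ _ GK] := HG; exact/subring_predP/GK.
  by exists (PredSub Gk)%:P; rewrite !map_polyC !hornerC.
Qed.

Lemma graph_adjoin_sub pr : G pr -> graph_adjoin x y pr.
Proof.
move=> Gpr; have Ga : pr \in subring_pred G_subring by exact/subring_predP.
by exists (PredSub Ga)%:P; rewrite !map_polyC !hornerC -surjective_pairing.
Qed.

Lemma graph_adjoin_xy : graph_adjoin x y (x, y).
Proof. by exists 'X; rewrite !map_polyX !hornerX. Qed.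

End Adjoin.

Lemma kHom_graph_extend x :
  exists2 G', kHom_graph K G' & (forall pr, G pr -> G' pr) /\ exists y, G' (x, y).
Proof.
have [m min_m] := graph_min_poly x; have [m_neq0 mx _] := min_m.
have [y my] : exists y, root (map_poly g m) y.
  apply/closed_rootP; rewrite size_map_poly_id0 ?graph_lead_coef_neq0 //.
  apply: contraTneq mx => /eqP/size_poly1P[c c_neq0 ->].
  by rewrite map_polyC rootC -(rmorph0 f) (inj_eq graph_fst_inj).
exists (graph_adjoin x y); first exact: kHom_graph_adjoin min_m my.
by split=> [pr|]; [apply: graph_adjoin_sub | exists y; apply: graph_adjoin_xy].
Qed.

End GraphExtension.

Definition diag_graph (L : Type) (K : L -> Prop) : set (L * L) :=
  fun pr => K pr.1 /\ pr.2 = pr.1.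

Lemma kHom_diag_graph (L : fieldType) (K : L -> Prop) :
  is_subfield K -> kHom_graph K (diag_graph K).
Proof.
move=> [[K1 [KB KM]] _]; split; [split; [|split] | |] => //.
- by move=> [a _] [b _] [/= Ka ->] [/= Kb ->]; split=> //=; apply: KB.
- by move=> [a _] [b _] [/= Ka ->] [/= Kb ->]; split=> //=; apply: KM.
- by move=> a b c [_ /= ->] [_ /= ->].
Qed.

Section Automorphisms.
Variables (L : closedFieldType) (K : L -> Prop).
Hypothesis algK : algebraic_over K.
Local Open Scope classical_set_scope.

(* [G0] is added to every graph of the chain so that the empty chain has an upper bound. *)
Lemma kHom_graph_chain (G0 : set (L * L)) (F : set (set (L * L))) :
  kHom_graph K G0 -> F `<=` (fun X => kHom_graph K (X `|` G0)) -> total_on F subset ->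
  kHom_graph K ((\bigcup_(X in F) X) `|` G0).
Proof.
move=> HG0 FH Ftot; set U := _ `|` G0.
have inF X : F X -> kHom_graph K (X `|` G0) /\ X `|` G0 `<=` U.
  by move=> FX; split; [exact: FH | apply: setSU; exact: bigcup_sup].
have common pr1 pr2 : U pr1 -> U pr2 ->
    exists Y, [/\ kHom_graph K Y, Y `<=` U, Y pr1 & Y pr2].
  case=> [[X1 FX1 X1pr]|G0pr1] [[X2 FX2 X2pr]|G0pr2].
  - have [X12|X21] := Ftot _ _ FX1 FX2.
      by exists (X2 `|` G0); have [? ?] := inF _ FX2; split=> //; left=> //; apply: X12.
    by exists (X1 `|` G0); have [? ?] := inF _ FX1; split=> //; left=> //; apply: X21.
  - by exists (X1 `|` G0); have [? ?] := inF _ FX1; split=> //; [left | right].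
  - by exists (X2 `|` G0); have [? ?] := inF _ FX2; split=> //; [right | left].
  - by exists G0; split=> //; apply: subsetUr.
split; [split; [|split] | |].
- by right; case: HG0 => -[].
- move=> pr1 pr2 /common/[apply] -[Y [[[_ [YB _]] _ _] YU Y1 Y2]]; exact/YU/YB.
- move=> pr1 pr2 /common/[apply] -[Y [[[_ [_ YM]] _ _] YU Y1 Y2]]; exact/YU/YM.
- move=> a b c /common/[apply] -[Y [[_ Yfun _] _ Yab Yac]]; exact: Yfun Yab Yac.
- by move=> k Kk; right; case: HG0 => _ _; apply.
Qed.

Lemma kHom_graph_total (G0 : set (L * L)) : kHom_graph K G0 ->
  exists2 G, kHom_graph K G & G0 `<=` G /\ forall x, exists y, G (x, y).
Proof.
move=> HG0; have [X [HX X_max]] := Zorn_bigcup (fun F => @kHom_graph_chain G0 F HG0).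
exists (X `|` G0) => //; split=> [|x]; first exact: subsetUr.
apply: contrapT => no_y; have [G' HG' [XG' [y G'xy]]] := kHom_graph_extend algK HX x.
apply: (X_max G'); last by rewrite (setUidPl _ _).2 // => pr G0pr; apply: XG'; right.
split=> [pr Xpr|G'X]; first by apply/XG'; left.
by apply: no_y; exists y; left; apply: G'X.
Qed.

Lemma fix_rmorph_surj (sigma : {rmorphism L -> L}) :
  (forall k, K k -> sigma k = k) -> forall z, exists w, sigma w = z.
Proof.
move=> sigmaK z; have [h [h_neq0 [Kh hz]]] := algK z.
have [rs defh] := closed_field_poly_normal h.
have rootE w : root h w = (w \in undup rs).
  by rewrite mem_undup {1}defh rootZ ?lead_coef_eq0 ?root_prod_XsubC.
have sigma_root w : root h w -> root h (sigma w).
  have fix_h : map_poly sigma h = h by apply/polyP => i; rewrite coef_map /= sigmaK.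
  by move=> hw; rewrite /root -fix_h horner_map (rootP hw) rmorph0.
have uniq_image : uniq (map sigma (undup rs)).
  by rewrite (map_inj_uniq (fmorph_inj sigma)) undup_uniq.
have image_sub : {subset map sigma (undup rs) <= undup rs}.
  by move=> v /mapP[w]; rewrite -!rootE => /sigma_root hw ->.
have [_ same] := uniq_min_size uniq_image image_sub (eq_leq (esym (size_map _ _))).
have : z \in map sigma (undup rs) by rewrite same -rootE.
by case/mapP=> w _ ->; exists w.
Qed.

Lemma kHom_graph_extend_aut (G0 : set (L * L)) : kHom_graph K G0 ->
  exists2 sigma : {rmorphism L -> L}, in_GK K sigma & forall a b, G0 (a, b) -> sigma a = b.
Proof.
move=> HG0; have [G [[G1 [GB GM]] Gfun GK] [G0G Gtot]] := kHom_graph_total HG0.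
have [s Gs] := choice Gtot.
have sE a b : G (a, b) -> s a = b by apply: Gfun.
have s_zmod : zmod_morphism s by move=> a b; apply: sE (GB _ _ (Gs a) (Gs b)).
have s_monoid : monoid_morphism s.
  by split=> [|a b]; [apply: sE G1 | apply: sE (GM _ _ (Gs a) (Gs b))].
pose sigma : {rmorphism L -> L} :=
  HB.pack s (GRing.isZmodMorphism.Build _ _ s s_zmod)
    (GRing.isMonoidMorphism.Build _ _ s s_monoid).
have sigmaK k : K k -> sigma k = k by move/GK/sE.
exists sigma => [|a b /G0G/sE //]; split => //.
have [t sigmaK'] := choice (fix_rmorph_surj sigmaK).
by exists t => // x; apply: (fmorph_inj sigma); rewrite sigmaK'.
Qed.

Lemma in_GK_inv (sigma : {rmorphism L -> L}) : in_GK K sigma ->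
  exists2 tau : {rmorphism L -> L}, in_GK K tau & cancel sigma tau /\ cancel tau sigma.
Proof.
move=> [[t sigmaK tK] fixK].
pose tau : {rmorphism L -> L} :=
  HB.pack t (GRing.isZmodMorphism.Build _ _ t (can2_zmod_morphism sigmaK tK))
    (GRing.isMonoidMorphism.Build _ _ t (can2_monoid_morphism sigmaK tK)).
exists tau => //; split; first by exists sigma.
by move=> k Kk; rewrite -[in LHS](fixK k Kk) [LHS]sigmaK.
Qed.

Lemma exists_min_poly_over x : exists h, min_poly_over K x h.
Proof.
have [h [[h_neq0 [Kh hx]] h_min]] := @ex_minimizer _
  (fun h => h != 0 /\ poly_over K h /\ root h x) size (algK x).
exists h; split=> // r Kr rx; apply: contraTeq => r_neq0; rewrite -leqNgt; exact: h_min.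
Qed.

Lemma min_poly_root_conjugate (Kf : is_subfield K) x w h :
  min_poly_over K x h -> root h w -> exists2 sigma, in_GK K sigma & sigma x = w.
Proof.
move=> minh hw; have HD := kHom_diag_graph Kf.
have [P minP gP] := graph_lift_min_poly HD (fun a b => @proj1 _ _) minh.
have Pw : root (map_poly (snd \o val) P) w by rewrite gP.
have [sigma GKsigma sigmaE] := kHom_graph_extend_aut (kHom_graph_adjoin algK minP Pw).
by exists sigma => //; apply/sigmaE/graph_adjoin_xy.
Qed.

End Automorphisms.

Lemma coef_exp_pchar_nat (R : comNzRingType) (q : nat) (P : {poly R}) k :
  [pchar R].-nat q -> (P ^+ q)`_k = if (q %| k)%N then P`_(k %/ q) ^+ q else 0.
Proof.
move=> qR; have q_gt0 : (0 < q)%N by case/andP: qR.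
have qRX : [pchar {poly R}].-nat q by rewrite (eq_pnat _ (@pchar_poly R)).
elim/poly_ind: P k => [|P c IHP] k.
  by rewrite expr0n gtn_eqF // coef0 coef0 expr0n gtn_eqF //; case: ifP.
rewrite exprDn_pchar // exprMn -rmorphXn coefD coefMXn coefC.
have [->|k_gt0] := posnP k.
  by rewrite q_gt0 dvdn0 div0n add0r coefD coefMX coefC add0r.
case: ltnP => [k_lt_q|q_le_k].
  by rewrite add0r; case: ifP => // /(dvdn_leq k_gt0); rewrite leqNgt k_lt_q.
rewrite addr0 IHP; have -> : k = ((k - q) + 1 * q)%N by rewrite mul1n subnK.
by rewrite divnDMl // mul1n addnK dvdn_addl ?dvdnn // addn1 coefD coefMX coefC addr0.
Qed.

Lemma coef_exp_XsubC (R : comNzRingType) (w : R) d :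
  (('X - w%:P) ^+ d.+1)`_d = - (d.+1%:R * w).
Proof.
elim: d => [|d IHd]; first by rewrite expr1 coefB coefX coefC sub0r mul1r.
rewrite exprSr mulrBr coefB coefMX IHd coefMC.
have /monicP : ('X - w%:P) ^+ d.+1 \is monic by apply/monic_exp/monicXsubC.
rewrite lead_coefE size_exp_XsubC => ->.
by rewrite mul1r -opprD [in RHS]mulrSr mulrDl mul1r.
Qed.

Section PurelyInseparable.
Variables (L : closedFieldType) (K : L -> Prop).
Hypotheses (Kf : is_subfield K) (algK : algebraic_over K).

Local Notation KP := (subfield_pred Kf).

Lemma exp_XsubC_poly_over d w : (0 < d)%N -> poly_over K (('X - w%:P) ^+ d) ->
  exists2 q, [pchar L].-nat q & K (w ^+ q).
Proof.
elim/ltn_ind: d w => d IHd w d_gt0 Kd.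
have [dL_neq0|/negbNE dL0] := boolP (d%:R != 0 :> L).
  exists 1%N => //; rewrite expr1; apply/(subfield_predP Kf).
  have Kdw : d%:R * w \in KP.
    have /(subfield_predP Kf) := Kd d.-1.
    by rewrite -[in X in ('X - _) ^+ X](prednK d_gt0) coef_exp_XsubC prednK // rpredN.
  by rewrite -(mulKf dL_neq0 w) rpredM ?rpredV ?rpred_nat.
have [p pL] := natf0_pchar d_gt0 dL0.
have p_prime := pcharf_prime pL.
have p_dvd_d : (p %| d)%N by rewrite (dvdn_pcharf pL).
have pLX : p \in [pchar {poly L}] by rewrite pchar_poly.
have Frob : ('X - w%:P) ^+ p = 'X^p - (w ^+ p)%:P.
  rewrite -(pFrobenius_autE pLX) pFrobenius_autB_comm; last exact: mulrC.
  by rewrite !pFrobenius_autE rmorphXn.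
have defd : ('X - w%:P) ^+ d = (('X - (w ^+ p)%:P) ^+ (d %/ p)) \Po 'X^p.
  rewrite -{1}(divnK p_dvd_d) mulnC exprM Frob [RHS](rmorphXn (comp_poly 'X^p)) /=.
  by rewrite comp_polyB comp_polyX comp_polyC.
have [| | |q qL Kwq] := IHd (d %/ p)%N _ (w ^+ p).
- by rewrite ltn_Pdiv ?prime_gt1.
- by rewrite divn_gt0 ?prime_gt0 // dvdn_leq.
- move=> i; have := Kd (i * p)%N.
  by rewrite defd coef_comp_poly_Xn ?prime_gt0 // dvdn_mull // mulnK // prime_gt0.
by exists (p * q)%N; rewrite ?exprM // pnatM pnatE // pL.
Qed.

Lemma fixed_purely_inseparable z : (forall sigma, in_GK K sigma -> sigma z = z) ->
  exists2 q, [pchar L].-nat q & K (z ^+ q).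
Proof.
move=> z_fixed; have [h minh] := exists_min_poly_over algK z.
have [h_neq0 Kh hz _] := minh.
have [rs defh] := closed_field_poly_normal h.
have rs_z : all (pred1 z) rs.
  apply/allP => r r_rs.
  have hr : root h r by rewrite defh rootZ ?lead_coef_eq0 ?root_prod_XsubC.
  have [sigma /z_fixed sigma_z <-] := min_poly_root_conjugate algK Kf minh hr.
  by rewrite /= sigma_z.
have lc_neq0 : lead_coef h != 0 by rewrite lead_coef_eq0.
have Klc : K (lead_coef h) by rewrite lead_coefE; apply: Kh.
apply: (@exp_XsubC_poly_over (size rs)).
  rewrite lt0n size_eq0; apply: contraTneq hz => rs0.
  by rewrite defh rs0 big_nil alg_polyC rootC lead_coef_eq0.
move=> i; apply/(subfield_predP Kf).
have -> : ('X - z%:P) ^+ size rs = (lead_coef h)^-1 *: h.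
  by rewrite {2}defh scalerA mulVf // scale1r (all_pred1P _ _ rs_z) big_nseq size_nseq iter_mulr_1.
by rewrite coefZ rpredM ?rpredV //; apply/(subfield_predP Kf).
Qed.

Lemma purely_inseparable_seq (s : seq L) :
  {in s, forall z, exists2 q, [pchar L].-nat q & K (z ^+ q)} ->
  exists2 q, [pchar L].-nat q & {in s, forall z, K (z ^+ q)}.
Proof.
elim: s => [|z s IHs] insep; first by exists 1%N.
have [|q qL Ks] := IHs; first by move=> y ys; apply: insep; rewrite inE ys orbT.
have [qz qzL Kz] := insep z (mem_head _ _).
exists (q * qz)%N => [|y]; first by rewrite pnatM qL.
rewrite inE => /predU1P[->|ys]; apply/(subfield_predP Kf).
  by rewrite mulnC exprM rpredX //; apply/(subfield_predP Kf).
by rewrite exprM rpredX //; apply/(subfield_predP Kf)/Ks.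
Qed.

End PurelyInseparable.

Lemma tofrac_inj (R : idomainType) : injective (@FracField.tofrac R).
Proof. by move=> p q /eqP; rewrite tofrac_eq => /eqP. Qed.

Lemma horner_frac_homog (E : fieldType) (p : {poly E}) (a b : E) N :
  b != 0 -> (size p <= N.+1)%N ->
  p.[a / b] * b ^+ N = \sum_(i < N.+1) p`_i * a ^+ i * b ^+ (N - i).
Proof.
move=> b_neq0 sp; rewrite (horner_coef_wide _ sp) mulr_suml; apply: eq_bigr => i _.
have -> : b ^+ N = b ^+ i * b ^+ (N - i) by rewrite -exprD subnKC // -ltnS.
by rewrite expr_div_n !mulrA mulfVK // expf_neq0.
Qed.

Lemma root_frac_dvdp (L : fieldType) (P : {poly {poly L}}) (u v : {poly L}) :
  P \is monic -> v != 0 -> root (map_poly tofracp P) (tofracp u / tofracp v) -> v %| u.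
Proof.
move=> P_monic v_neq0 Puv; set g := gcdp u v; set u1 := u %/ g; set v1 := v %/ g.
have g_neq0 : g != 0 by rewrite gcdp_eq0 negb_and v_neq0 orbT.
have defu : u = u1 * g by rewrite divpK // dvdp_gcdl.
have defv : v = v1 * g by rewrite divpK // dvdp_gcdr.
suff : v1 %| u1 by rewrite defu defv dvdp_mul2r.
have v1_neq0 : v1 != 0 by apply: contraNneq v_neq0 => v10; rewrite defv v10 mul0r.
have u1v1 : tofracp u1 / tofracp v1 = tofracp u / tofracp v.
  by rewrite defu defv !rmorphM invfM mulrACA mulfV ?tofrac_eq0 // mulr1.
(* Clearing denominators, [v1] divides [u1 ^+ N], to which it is coprime. *)
set N := (size P).-1; have P_N : P`_N = 1 by rewrite -lead_coefE; apply/monicP.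
have : \sum_(i < N.+1) P`_i * u1 ^+ i * v1 ^+ (N - i) = 0.
  apply: tofrac_inj; rewrite rmorph0 rmorph_sum.
  transitivity ((map_poly tofracp P).[tofracp u1 / tofracp v1] * tofracp v1 ^+ N).
    rewrite horner_frac_homog ?tofrac_eq0 ?size_map_inj_poly ?leqSpred //; last exact: tofrac_inj.
    by apply: eq_bigr => i _; rewrite coef_map !rmorphM !rmorphXn.
  by rewrite u1v1 (rootP Puv) mul0r.
rewrite big_ord_recr /= P_N subnn expr0 mulr1 mul1r => /eqP; rewrite addr_eq0 => /eqP/(congr1 -%R).
rewrite opprK => u1N.
have : v1 %| 1 * u1 ^+ N.
  rewrite mul1r; apply/dvdpP; exists (- \sum_(i < N) P`_i * u1 ^+ i * v1 ^+ (N - i.+1)).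
  rewrite -u1N mulNr mulr_suml; congr (- _); apply: eq_bigr => i _.
  by rewrite -!mulrA -exprSr subnSK.
rewrite Gauss_dvdpl => [v1_1|]; first exact: dvdp_trans v1_1 (dvd1p u1).
by apply: coprimep_expr; rewrite coprimep_sym coprimep_div_gcd ?v_neq0 ?orbT.
Qed.

Lemma IntF_of_integral_ratfun (L : fieldType) (D K F Omega : L -> Prop)
    (phi : {fraction {poly L}}) :
  is_subring D -> is_subfield F -> in_ratfun_field F phi ->
  integral_over (fun psi => exists g, IntF K Omega (integral_over D) g /\ psi = tofracp g) phi ->
  exists f, IntF F Omega (integral_over D) f /\ phi = tofracp f.
Proof.
move=> HD Ff [u [v [Fu [Fv [v_neq0 ->]]]]] [pp [pp_monic [pp_coef pp_root]]].
pose intOmega (g : {poly L}) := forall a, Omega a -> integral_over D g.[a].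
have [||P P_int defpp] := @map_poly_lift _ _ tofracp intOmega pp.
- by move=> a _; rewrite horner0; apply/integral_over_id/(subring_predP HD)/rpred0.
- by move=> i; have [g [[_ g_int] ->]] := pp_coef i; exists g.
have P_monic : P \is monic.
  apply/monicP/tofrac_inj; rewrite rmorph1 -(monicP pp_monic) -defpp.
  by rewrite lead_coef_map_inj //; apply: tofrac_inj.
have Puv : root (map_poly tofracp P) (tofracp u / tofracp v) by rewrite defpp.
have defu : u = (u %/ v) * v by rewrite divpK // (root_frac_dvdp P_monic v_neq0 Puv).
have phiE : tofracp u / tofracp v = tofracp (u %/ v).
  by rewrite {1}defu rmorphM mulfK // tofrac_eq0.
exists (u %/ v); split=> //; split; first exact: poly_over_divp.
have Pf : P.[u %/ v] = 0.
  by apply: tofrac_inj; rewrite -horner_map /= -phiE (rootP Puv) rmorph0.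
move=> a Oa; apply: (integral_over_root_monic HD (p := map_poly (horner_eval a) P)).
- exact: monic_map.
- by rewrite /root -[_.[a]]horner_evalE horner_map Pf rmorph0.
- by move=> i; rewrite coef_map; apply: P_int.
Qed.

Fixpoint polys_with_coefs (R : nzRingType) (rs : seq R) n : seq {poly R} :=
  if n is n'.+1 then [seq g * 'X + r%:P | g <- polys_with_coefs rs n', r <- rs] else [:: 0].

Lemma mem_polys_with_coefs (R : nzRingType) (rs : seq R) n (g : {poly R}) :
  (size g <= n)%N -> (forall i, (i < n)%N -> g`_i \in rs) -> g \in polys_with_coefs rs n.
Proof.
elim: n g => [|n IHn] g size_g g_rs /=; first by rewrite inE -size_poly_eq0 -leqn0.
have -> : g = drop_poly 1 g * 'X + (g`_0)%:P.
  by apply/polyP => -[|i]; rewrite coefD coefMX coefC ?coef_drop_poly ?add0r ?addr0 ?addn1.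
apply: allpairs_f; last exact: g_rs.
apply: IHn => [|i lt_in]; first by rewrite size_drop_poly leq_subLR add1n.
by rewrite coef_drop_poly g_rs // addn1.
Qed.

Lemma poly_over_exp_pchar (R : comNzRingType) (S : R -> Prop) (q : nat) (p : {poly R}) :
  is_subring S -> [pchar R].-nat q -> (forall j, S (p`_j ^+ q)) -> poly_over S (p ^+ q).
Proof.
move=> HS qR Sp j; rewrite coef_exp_pchar_nat //; case: ifP => // _.
by apply/(subring_predP HS)/rpred0.
Qed.

Section Backward.
Variables (L : closedFieldType) (D K Omega : L -> Prop).
Hypotheses (HD : is_subring D) (Kf : is_subfield K) (DK : forall x, D x -> K x)
  (algK : algebraic_over K) (OmegaG : GK_invariant K Omega).

Local Notation integral_on_Omega f := (forall a, Omega a -> integral_over D f.[a]).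
Local Notation conjugate f g :=
  (exists2 sigma : {rmorphism L -> L}, in_GK K sigma & g = map_poly sigma f).

Lemma integral_over_conj (sigma : {rmorphism L -> L}) x :
  in_GK K sigma -> integral_over D x -> integral_over D (sigma x).
Proof.
move=> [_ sigmaK] [p [p_monic [Dp px]]]; exists p; split=> //; split=> //.
have <- : map_poly sigma p = p by apply/polyP => i; rewrite coef_map /= sigmaK //; apply: DK.
exact: rmorph_root.
Qed.

(* [(sigma f)(a) = sigma (f (tau a))] with [tau = sigma^-1], and [tau a] is in [Omega]. *)
Lemma conj_integral_on_Omega (sigma : {rmorphism L -> L}) f :
  in_GK K sigma -> integral_on_Omega f -> integral_on_Omega (map_poly sigma f).
Proof.
move=> GKsigma f_int a Oa; have [tau GKtau [_ tauK]] := in_GK_inv GKsigma.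
have Otau : Omega (tau a) by apply/OmegaG; exists tau, a.
by rewrite -(tauK a) horner_map; apply/integral_over_conj/f_int.
Qed.

Lemma finite_conjugates (f : {poly L}) :
  exists2 C : seq {poly L}, uniq C & forall g, g \in C <-> conjugate f g.
Proof.
have [h hP] := choice (fun i => algK f`_i).
pose H := \prod_(i < size f) h i.
have H_neq0 : H != 0 by rewrite prodf_seq_neq0; apply/allP => i _; case: (hP i).
have [rs defH] := closed_field_poly_normal H.
have conj_coef g i : conjugate f g -> (i < size f)%N -> root H g`_i.
  move=> [sigma [_ sigmaK] ->] lt_i_f; have [_ [Kh hf]] := hP i.
  have hi_sigma : root (h i) (sigma f`_i).
    have <- : map_poly sigma (h i) = h i by apply/polyP => j; rewrite coef_map /= sigmaK.
    exact: rmorph_root.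
  rewrite coef_map /root horner_prod (bigD1 (Ordinal lt_i_f)) //=.
  by rewrite (rootP hi_sigma) mul0r.
exists [seq g <- undup (polys_with_coefs rs (size f)) | `[< conjugate f g >]].
  by rewrite filter_uniq ?undup_uniq.
move=> g; rewrite mem_filter mem_undup; split=> [/andP[/asboolP //]|conj_g].
rewrite (asboolT conj_g) /=; apply: mem_polys_with_coefs => [|i /(conj_coef g i conj_g)].
  by case: conj_g => sigma _ ->; rewrite size_map_poly.
by rewrite {1}defH rootZ ?lead_coef_eq0 ?root_prod_XsubC.
Qed.

Lemma conjugates_prod_fixed (f : {poly L}) (C : seq {poly L}) :
  uniq C -> (forall g, g \in C <-> conjugate f g) -> forall tau : {rmorphism L -> L}, in_GK K tau ->
  map_poly (map_poly tau) (\prod_(g <- C) ('X - g%:P)) = \prod_(g <- C) ('X - g%:P).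
Proof.
move=> uC memC tau [tau_bij tauK]; rewrite rmorph_prod.
under eq_bigr do rewrite rmorphB /= map_polyX map_polyC.
rewrite -(big_map (map_poly tau) xpredT (fun g => 'X - g%:P)).
have uC' : uniq (map (map_poly tau) C) by rewrite map_inj_uniq //; apply: map_poly_inj.
have sub : {subset map (map_poly tau) C <= C}.
  move=> _ /mapP[_ /memC[sigma [sigma_bij sigmaK] ->] ->].
  apply/memC; exists (tau \o sigma : {rmorphism L -> L}); last by rewrite map_poly_comp.
  by split=> [|k Kk]; [apply: bij_comp | rewrite /= sigmaK ?tauK].
have [_ same] := uniq_min_size uC' sub (eq_leq (esym (size_map _ _))).
by apply/perm_big/uniq_perm.
Qed.

Lemma fixed_coefs_purely_inseparable (P : {poly {poly L}}) :
  (forall tau, in_GK K tau -> map_poly (map_poly tau) P = P) ->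
  exists2 q, [pchar L].-nat q & forall i j, K ((P`_i)`_j ^+ q).
Proof.
move=> P_fixed; pose s := [seq (P`_i)`_j | i <- iota 0 (size P), j <- iota 0 (size P`_i)].
have [|q qL Ks] := purely_inseparable_seq Kf (s := s).
  move=> _ /allpairsPdep[i [j [_ _ ->]]]; apply: (fixed_purely_inseparable Kf algK).
  by move=> tau /P_fixed/(congr1 (fun Q : {poly {poly L}} => (Q`_i)`_j)); rewrite /= !coef_map.
exists q => // i j; have q_gt0 : (0 < q)%N by case/andP: qL.
have [lt_i_P|le_P_i] := ltnP i (size P); last first.
  by rewrite [P`_i]nth_default // coef0 expr0n gtn_eqF //; apply/(subfield_predP Kf)/rpred0.
have [lt_j_Pi|le_Pi_j] := ltnP j (size P`_i); last first.
  by rewrite nth_default // expr0n gtn_eqF //; apply/(subfield_predP Kf)/rpred0.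
by apply: Ks; apply/allpairsPdep; exists i, j; rewrite !mem_iota.
Qed.

Lemma monic_IntK_annihilator (f : {poly L}) : integral_on_Omega f ->
  exists2 Q : {poly {poly L}}, Q \is monic &
    (forall i, IntF K Omega (integral_over D) Q`_i) /\ root Q f.
Proof.
move=> f_int; have [C uC memC] := finite_conjugates f.
pose P := \prod_(g <- C) ('X - g%:P).
have HI := integral_over_subring HD.
have P_int i : integral_on_Omega P`_i.
  move=> a Oa; have : map_poly (horner_eval a) P \is a polyOver (subring_pred HI).
    rewrite rmorph_prod big_seq; apply: rpred_prod => g /memC[sigma GKsigma ->].
    rewrite rmorphB /= map_polyX map_polyC polyOverXsubC.
    by apply/subring_predP; apply: conj_integral_on_Omega.
  by move/polyOverP/(_ i); rewrite coef_map => /subring_predP.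
have [q qL Kq] := fixed_coefs_purely_inseparable (conjugates_prod_fixed uC memC).
have q_gt0 : (0 < q)%N by case/andP: qL.
have qLX : [pchar {poly L}].-nat q by rewrite (eq_pnat _ (@pchar_poly L)).
exists (P ^+ q); first exact/monic_exp/monic_prod_XsubC.
split; last first.
  have Pf : root P f.
    rewrite root_prod_XsubC; apply/memC.
    by exists idfun; [split=> //; exists idfun | rewrite map_poly_id].
  by rewrite /root horner_exp (rootP Pf) expr0n gtn_eqF.
move=> k; rewrite coef_exp_pchar_nat //; case: ifP => _; last first.
  split=> [i|a _]; rewrite ?coef0 ?horner0; first exact/(subfield_predP Kf)/rpred0.
  exact/integral_over_id/(subring_predP HD)/rpred0.
split=> [|a Oa]; first by apply: poly_over_exp_pchar => //; case: Kf.
by rewrite horner_exp; apply/(subring_predP HI)/rpredX/(subring_predP HI)/P_int.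
Qed.

End Backward.

Theorem mainTheorem9 (L : closedFieldType) (D K F Omega : L -> Prop) :
  is_subring D -> is_subfield K -> is_quotient_field D K ->
  integrally_closed_in D K ->
  algebraic_over K ->
  (forall a, Omega a -> integral_over D a) ->
  GK_invariant K Omega ->
  is_subfield F -> (forall x, K x -> F x) -> (forall a, Omega a -> F a) ->
  forall phi : {fraction {poly L}},
    (in_ratfun_field F phi /\
     integral_over (fun psi => exists g, IntF K Omega (integral_over D) g /\ psi = tofracp g) phi)
    <-> exists f, IntF F Omega (integral_over D) f /\ phi = tofracp f.
Proof.
move=> HD Kf [DK _] _ algK _ OmegaG Ff _ _ phi; split.
  by move=> [Fphi phi_int]; apply: IntF_of_integral_ratfun HD Ff Fphi phi_int.
move=> [f [[Ff_f f_int] ->]]; split.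
  exists f, 1; split=> //; split; first exact/(poly_overP Ff.1)/rpred1.
  by rewrite oner_neq0 rmorph1 divr1.
have [Q Q_monic [Q_int Qf]] := monic_IntK_annihilator HD Kf DK algK OmegaG f_int.
exists (map_poly tofracp Q); split; first exact: monic_map.
by split=> [i|]; [exists Q`_i; rewrite coef_map | exact: rmorph_root].
Qed.
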